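(* Let $K$ be a commutative unital ring, $G$ a finite groupoid, and $A=\bigoplus_{g\in G}A_g$ a unital $G$-graded $K$-algebra. Let $B=A\#KG^*$. For $g\in G$ put $$E_g=\bigoplus_{l,k\in G,\ d(k)=r(g)}A_l\#v_k\subseteq B,$$ and define $\beta_g:E_{g^{-1}}\to E_g$ by $\beta_g(a_l\#v_k)=a_l\#v_{kg^{-1}}$ for $a_l\in A_l$. Then $\beta=(\{E_g\}_{g\in G},\{\beta_g\}_{g\in G})$ is an action of $G$ on $B$, and $B=\bigoplus_{e\in G_0}E_e$.
   Context: A groupoid is a small category in which every morphism is invertible; we regard it as the set $G$ of its morphisms with the partial multiplication given by composition. For $g\in G$, $d(g)=g^{-1}g$ and $r(g)=gg^{-1}$ are its domain and range identities. The product $gh$ is defined iff $d(g)=r(h)$, and then $d(gh)=d(h)$, $r(gh)=r(g)$. $G^2=\{(g,h): d(g)=r(h)\}$, and $G_0$ is the set of identities. An action of $G$ on a ring $R$ is a pair $\beta=(\{E_g\}_{g\in G},\{\beta_g\}_{g\in G})$ such that: - each $E_g$ is an ideal of $R$ with $E_g=E_{r(g)}$; - each $\beta_g:E_{g^{-1}}\to E_g$ is a ring isomorphism; - $\beta_e=\mathrm{id}_{E_e}$ for $e\in G_0$; - $\beta_g\beta_h(x)=\beta_{gh}(x)$ for all $(g,h)\in G^2$ and $x\in E_{h^{-1}}$. A $G$-graded $K$-algebra is $A=\bigoplus_{g\in G}A_g$ (a direct sum of $K$-submodules) with $A_gA_h\subseteq A_{gh}$ if $(g,h)\in G^2$ and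 $A_gA_h=0$ otherwise. $KG^*$ is the free $K$-module with basis $\{v_g\}_{g\in G}$ and multiplication $v_gv_h=\delta_{g,h}v_g$, with identity $\sum_g v_g$. It acts on $A$ by $v_h\cdot a=a_h$, the $h$-component of $a$. The weak smash product $A\#KG^*$ is $A\otimes_K KG^*$, with $a\#v_g:=a\otimes v_g$. Its multiplication is $(a\#v_g)(b\#v_h)=a(v_{gh^{-1}}\cdot b)\#v_h$ if $d(g)=d(h)$, and $0$ otherwise. *)

From HB Require Import structures.
From mathcomp Require Import all_boot all_order all_algebra.
Set Implicit Arguments. Unset Strict Implicit. Unset Printing Implicit Defensive.
Import GRing.Theory.
Local Open Scope ring_scope.

(* gd g = g^-1 g (domain), gr g = g g^-1 (range); gmul g h is the product,
   meaningful only when gd g = gr h (its value elsewhere is irrelevant). *)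
Record groupoid := Groupoid {
  gcar :> finType;
  gmul : gcar -> gcar -> gcar;
  ginv : gcar -> gcar;
  gd : gcar -> gcar;
  gr : gcar -> gcar;
  gd_def : forall g, gd g = gmul (ginv g) g;
  gr_def : forall g, gr g = gmul g (ginv g);
  gd_inv : forall g, gd (ginv g) = gr g;
  gr_inv : forall g, gr (ginv g) = gd g;
  gd_mul : forall g h, gd g = gr h -> gd (gmul g h) = gd h;
  gr_mul : forall g h, gd g = gr h -> gr (gmul g h) = gr g;
  gmulA : forall g h k, gd g = gr h -> gd h = gr k ->
            gmul (gmul g h) k = gmul g (gmul h k);
  gr_d : forall g, gr (gd g) = gd g;
  gd_r : forall g, gd (gr g) = gr g;
  gmul_d : forall g, gmul g (gd g) = g;
  gmul_r : forall g, gmul (gr g) g = g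
}.

Definition gid (G : groupoid) (e : G) : bool := e \in codom (@gd G).

(* Ag g : the homogeneous component A_g (a predicate on A);
   comp h a : the h-component a_h of a (= v_h . a). *)
Definition graded_alg (K : comRingType) (G : groupoid) (A : algType K)
    (Ag : G -> A -> Prop) (comp : G -> A -> A) : Prop :=
  (forall g, Ag g 0) /\
  (forall g x y, Ag g x -> Ag g y -> Ag g (x + y)) /\
  (forall g (c : K) x, Ag g x -> Ag g (c *: x)) /\
  (forall h a, Ag h (comp h a)) /\
  (forall a, a = \sum_(h : G) comp h a) /\
  (forall f : G -> A, (forall g, Ag g (f g)) -> \sum_(g : G) f g = 0 ->
      forall g, f g = 0) /\
  (forall g h x y, Ag g x -> Ag h y -> gd g = gr h -> Ag (gmul g h) (x * y)) /\
  (forall g h x y, Ag g x -> Ag h y -> gd g <> gr h -> x * y = 0).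

(* Since KG^* is free on {v_g}, A (x)_K KG^* is identified with {ffun G -> A}:
   F corresponds to \sum_g F g # v_g. *)
Definition smash (K : comRingType) (G : groupoid) (A : algType K) :=
  {ffun G -> A}.

Definition tens (K : comRingType) (G : groupoid) (A : algType K) (a : A) (k : G)
  : smash G A := [ffun j => if j == k then a else 0].

(* (a # v_g)(b # v_h) = a (v_{g h^-1} . b) # v_h if d g = d h, 0 otherwise,
   extended bilinearly. *)
Definition smash_mul (K : comRingType) (G : groupoid) (A : algType K)
    (comp : G -> A -> A) (F1 F2 : smash G A) : smash G A :=
  [ffun h => \sum_(g : G | gd g == gd h) F1 g * comp (gmul g (ginv h)) (F2 h)].

Definition Eg (K : comRingType) (G : groupoid) (A : algType K)
    (Ag : G -> A -> Prop) (g : G) (F : smash G A) : Prop :=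
  exists c : G -> G -> A,
    (forall l k, Ag l (c l k)) /\
    (forall l k, gd k <> gr g -> c l k = 0) /\
    F = \sum_(l : G) \sum_(k : G) tens (c l k) k.

(* beta_g (a_l # v_k) = a_l # v_{k g^-1}, extended additively on E_{g^-1}
   (elements of E_{g^-1} are supported on k with d k = d g). *)
Definition beta (K : comRingType) (G : groupoid) (A : algType K)
    (g : G) (F : smash G A) : smash G A :=
  \sum_(k : G | gd k == gd g) tens (F k) (gmul k (ginv g)).

Definition is_ideal (R : zmodType) (mul : R -> R -> R) (I : R -> Prop) : Prop :=
  I 0 /\ (forall x y, I x -> I y -> I (x - y)) /\
  (forall b x, I x -> I (mul b x) /\ I (mul x b)).

Definition ring_iso_on (R : zmodType) (mul : R -> R -> R) (P Q : R -> Prop)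
    (f : R -> R) : Prop :=
  (forall x, P x -> Q (f x)) /\
  (forall x y, P x -> P y -> f x = f y -> x = y) /\
  (forall y, Q y -> exists2 x, P x & f x = y) /\
  (forall x y, P x -> P y -> f (x + y) = f x + f y) /\
  (forall x y, P x -> P y -> f (mul x y) = mul (f x) (f y)).

Definition groupoid_action (G : groupoid) (R : zmodType) (mul : R -> R -> R)
    (E : G -> R -> Prop) (b : G -> R -> R) : Prop :=
  (forall g, is_ideal mul (E g)) /\
  (forall g x, E g x <-> E (gr g) x) /\
  (forall g, ring_iso_on mul (E (ginv g)) (E g) (b g)) /\
  (forall e, gid e -> forall x, E e x -> b e x = x) /\
  (forall g h, gd g = gr h -> forall x, E (ginv h) x ->
      b g (b h x) = b (gmul g h) x).

Definition internal_direct_sum (G : groupoid) (R : zmodType) (P : pred G)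
    (E : G -> R -> Prop) : Prop :=
  (forall x, exists2 f : G -> R, (forall e, P e -> E e (f e)) &
       x = \sum_(e | P e) f e) /\
  (forall f : G -> R, (forall e, P e -> E e (f e)) ->
       \sum_(e | P e) f e = 0 -> forall e, P e -> f e = 0).

From HB Require Import structures.
From mathcomp Require Import all_boot all_order all_algebra.
Set Implicit Arguments. Unset Strict Implicit. Unset Printing Implicit Defensive.
Import GRing.Theory.
Local Open Scope ring_scope.

(* The key observation is that E_g has a description
   that no longer mentions the grading: F lies in E_g iff F is supported on
   the fibre {k | d k = r g} (lemma Eg_supportP; this uses only that every
   element of A is the sum of its homogeneous components).  Likewise beta_g
   has the pointwise formula  (beta_g F) j = F (j g)  if d j = r g, and 0
   otherwise (lemma betaE).  With these two descriptions every axiom of an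
   action becomes a computation on fibres:
   - E_g is an ideal and depends only on r g;
   - beta_g is a bijective additive map E_{g^-1} -> E_g with inverse
     j |-> F (j g^-1), multiplicative by a reindexing h |-> h g of the sum
     defining the product;
   - beta_e = id for identities e, and beta_g beta_h = beta_{gh};
   - B is the direct sum of the fibres over the identities e in G_0. *)

Section GroupoidFacts.
Variable G : groupoid.
Implicit Types e g h j k : G.

Lemma gr_gr g : gr (gr g) = gr g.
Proof. by rewrite -(gd_inv g) gr_d. Qed.

Lemma gd_gd g : gd (gd g) = gd g.
Proof. by rewrite -(gr_inv g) gd_r. Qed.

Lemma gid_dr e : gid e -> gr e = e /\ gd e = e.
Proof. by case/codomP => m ->; rewrite gr_d gd_gd. Qed.

Lemma gd_mulinv k g : gd k = gd g -> gd (gmul k (ginv g)) = gr g.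
Proof. by move=> dk; rewrite gd_mul ?gd_inv // gr_inv. Qed.

Lemma mulinvK k g : gd k = gd g -> gmul (gmul k (ginv g)) g = k.
Proof. by move=> dk; rewrite gmulA ?gr_inv ?gd_inv // -gd_def -dk gmul_d. Qed.

Lemma mulK j g : gd j = gr g -> gmul (gmul j g) (ginv g) = j.
Proof. by move=> dj; rewrite gmulA ?gr_inv ?gd_inv // -gr_def -dj gmul_d. Qed.

(* (j g)^-1 = g^-1 j^-1, shown by uniqueness of inverses. *)
Lemma ginv_mul j g : gd j = gr g -> ginv (gmul j g) = gmul (ginv g) (ginv j).
Proof.
move=> dj; set m := gmul j g; set n := gmul (ginv g) (ginv j).
have dgi : gd (ginv g) = gr (ginv j) by rewrite gd_inv gr_inv dj.
have rn : gr n = gd g by rewrite gr_mul // gr_inv.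
have dm : gd m = gd g by rewrite gd_mul.
have mn : gmul m n = gr m.
  rewrite /m gmulA // -(@gmulA _ g) ?dgi ?gr_inv //.
  by rewrite -gr_def -dj -(gr_inv j) gmul_r -gr_def gr_mul.
have -> : ginv m = gmul (ginv m) (gr m) by rewrite -gd_inv gmul_d.
rewrite -mn -gmulA ?gr_inv ?gd_inv ?dm ?rn //.
by rewrite -gd_def dm -rn gmul_r.
Qed.

(* Translating both h and j on the right by g does not change h j^-1;
   this is what makes beta_g multiplicative. *)
Lemma mul_shift_inv h j g : gd h = gr g -> gd j = gr g ->
  gmul (gmul h g) (ginv (gmul j g)) = gmul h (ginv j).
Proof.
move=> dh dj; have dgi : gd (ginv g) = gr (ginv j) by rewrite gd_inv gr_inv dj.
have rgj : gr (gmul (ginv g) (ginv j)) = gd g by rewrite gr_mul // gr_inv.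
rewrite ginv_mul // gmulA ?rgj // -(@gmulA _ g) ?dgi ?gr_inv //.
by rewrite -gr_def -dj -(gr_inv j) gmul_r.
Qed.

End GroupoidFacts.

Section SmashProductAction.
Variables (K : comRingType) (G : groupoid) (A : algType K)
    (Ag : G -> A -> Prop) (comp : G -> A -> A).
Hypothesis HA : graded_alg Ag comp.
Implicit Types (e g h j k : G) (F x y : smash G A).

(* The components of 0 vanish, by uniqueness of the homogeneous decomposition. *)
Lemma comp0 h : comp h 0 = 0.
Proof.
case: HA => _ [_ [_ [compA [sum_comp [uniq_dec _]]]]].
by apply: (uniq_dec (fun h => comp h 0)) => //; rewrite -sum_comp.
Qed.

Lemma sum_tensE (c : G -> G -> A) j :
  (\sum_l \sum_k tens (c l k) k) j = \sum_l c l j.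
Proof.
rewrite sum_ffunE; apply: eq_bigr => l _; rewrite sum_ffunE (bigD1 j) //=.
rewrite ffunE eqxx big1 ?addr0 // => k /negbTE kj.
by rewrite ffunE eq_sym kj.
Qed.

Lemma Eg_supportP g F : Eg Ag g F <-> (forall k, gd k != gr g -> F k = 0).
Proof.
case: HA => Ag0 [_ [_ [compA [sum_comp _]]]]; split.
  case=> c [_ [c0 ->]] k /eqP dk; rewrite sum_tensE big1 // => l _.
  exact: c0.
move=> Fsupp; exists (fun l k => if gd k == gr g then comp l (F k) else 0).
split; first by move=> l k; case: ifP => _; [exact: compA | exact: Ag0].
split; first by move=> l k /eqP/negbTE ->.
apply/ffunP => j; rewrite sum_tensE; case: (boolP (gd j == gr g)) => dj.
  by rewrite (eq_bigr (fun l => comp l (F j))) -?sum_comp // => l _; rewrite dj.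
by rewrite Fsupp // big1 // => l _; rewrite (negbTE dj).
Qed.

Lemma Eginv_supportP g F :
  Eg Ag (ginv g) F <-> (forall k, gd k != gd g -> F k = 0).
Proof.
split=> [/Eg_supportP F0 k|F0]; first by rewrite -(gr_inv g); exact: F0.
by apply/Eg_supportP => k; rewrite gr_inv; exact: F0.
Qed.

Lemma betaE g F j : beta g F j = if gd j == gr g then F (gmul j g) else 0.
Proof.
rewrite /beta sum_ffunE; case: ifP => dj.
  have djg : gd (gmul j g) == gd g by rewrite gd_mul ?(eqP dj).
  rewrite (bigD1 (gmul j g)) //= ffunE mulK ?(eqP dj) // eqxx big1 ?addr0 //.
  move=> k /andP [/eqP dk kj]; rewrite ffunE; case: eqP => // jk.
  by move: kj; rewrite jk mulinvK // eqxx.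
rewrite big1 // => k /eqP dk; rewrite ffunE; case: eqP => // jk.
by move: dj; rewrite jk gd_mulinv // eqxx.
Qed.

Lemma Eg_ideal g : is_ideal (smash_mul comp) (Eg Ag g).
Proof.
split; first by apply/Eg_supportP => k _; rewrite ffunE.
split.
  move=> x y /Eg_supportP x0 /Eg_supportP y0; apply/Eg_supportP => k dk.
  by rewrite !ffunE x0 // y0 // subr0.
move=> b x /Eg_supportP x0; split; apply/Eg_supportP => k dk; rewrite ffunE.
  by rewrite big1 // => l _; rewrite x0 // comp0 mulr0.
by rewrite big1 // => l /eqP dl; rewrite x0 ?mul0r // dl.
Qed.

Lemma Eg_gr g F : Eg Ag g F <-> Eg Ag (gr g) F.
Proof.
split=> /Eg_supportP F0; apply/Eg_supportP => k dk; apply: F0; by rewrite ?gr_gr in dk *.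
Qed.

(* beta_g is multiplicative (on all of B): reindex the product sum by h |-> h g. *)
Lemma beta_mul g x y :
  beta g (smash_mul comp x y) = smash_mul comp (beta g x) (beta g y).
Proof.
apply/ffunP => j; rewrite betaE !ffunE (betaE g y).
case: (eqVneq (gd j) (gr g)) => dj; last first.
  by rewrite big1 // => h _; rewrite comp0 mulr0.
have djg : gd (gmul j g) = gd g by rewrite gd_mul.
rewrite (reindex_onto (fun h => gmul h g) (fun h => gmul h (ginv g))) /=;
  last by move=> h /eqP; rewrite djg => /mulinvK.
(* After reindexing, h ranges over the fibre d h = r g = d j. *)
have fibre h : gd (gmul h g) = gd (gmul j g) -> gmul (gmul h g) (ginv g) = h ->
    gd h = gr g.
  by move=> dhg <-; rewrite gd_mulinv // dhg djg.
apply: eq_big => [h|h /andP [/eqP dhg /eqP hgK]].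
  apply/idP/idP => [/andP [/eqP dhg /eqP hgK]|/eqP dh].
    by rewrite (fibre h dhg hgK) dj.
  have {}dh : gd h = gr g by rewrite dh dj.
  by rewrite gd_mul // djg mulK // !eqxx.
have dh := fibre h dhg hgK.
by rewrite betaE dh eqxx mul_shift_inv.
Qed.

(* beta_g restricts to a ring isomorphism E_{g^-1} -> E_g,
   with inverse F |-> (k |-> F (k g^-1)) on the fibre d = d g. *)
Lemma beta_iso g : ring_iso_on (smash_mul comp) (Eg Ag (ginv g)) (Eg Ag g) (beta g).
Proof.
split; first by move=> x _; apply/Eg_supportP => j /negbTE dj; rewrite betaE dj.
split.
  move=> x y /Eginv_supportP x0 /Eginv_supportP y0 /ffunP bxy; apply/ffunP => k.
  case: (eqVneq (gd k) (gd g)) => dk; last by rewrite x0 // y0.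
  by move: (bxy (gmul k (ginv g))); rewrite !betaE gd_mulinv // eqxx mulinvK.
split.
  move=> y /Eg_supportP y0.
  exists [ffun k => if gd k == gd g then y (gmul k (ginv g)) else 0].
    by apply/Eginv_supportP => k /negbTE dk; rewrite ffunE dk.
  apply/ffunP => j; rewrite betaE; case: (eqVneq (gd j) (gr g)) => dj.
    by rewrite ffunE gd_mul ?dj // eqxx mulK.
  by rewrite y0.
split; last by move=> x y _ _; exact: beta_mul.
by move=> x y _ _; apply/ffunP => j; rewrite !(betaE, ffunE); case: ifP; rewrite ?addr0.
Qed.

Lemma beta_id e x : gid e -> Eg Ag e x -> beta e x = x.
Proof.
move=> /gid_dr [re de] /Eg_supportP x0; apply/ffunP => j; rewrite betaE re.
case: (eqVneq (gd j) e) => dj; first by rewrite -dj gmul_d.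
by rewrite x0 // re.
Qed.

Lemma beta_comp g h x : gd g = gr h -> beta g (beta h x) = beta (gmul g h) x.
Proof.
move=> dg; apply/ffunP => j; rewrite !betaE gr_mul //.
case: (eqVneq (gd j) (gr g)) => dj //.
by rewrite gd_mul ?dj // dg eqxx gmulA.
Qed.

Lemma beta_action : groupoid_action (smash_mul comp) (Eg Ag) (@beta K G A).
Proof.
split; first exact: Eg_ideal.
split; first exact: Eg_gr.
split; first exact: beta_iso.
split; first by move=> e ide x; exact: beta_id.
by move=> g h dg x _; exact: beta_comp.
Qed.

(* B is the direct sum of the E_e over the identities: split F along the
   fibres of d, which are indexed by G_0. *)
Lemma Eg_direct_sum : internal_direct_sum (@gid G) (Eg Ag).
Proof.
split.
  move=> x; exists (fun e => [ffun k => if gd k == e then x k else 0]).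
    move=> e /gid_dr [re _]; apply/Eg_supportP => k.
    by rewrite re ffunE => /negbTE ->.
  apply/ffunP => k; rewrite sum_ffunE (bigD1 (gd k)) /=; last exact: codom_f.
  rewrite ffunE eqxx big1 ?addr0 // => e /andP [_ ek].
  by rewrite ffunE eq_sym (negbTE ek).
move=> f fE sum0 e ide; apply/ffunP => k; rewrite ffunE.
have [re _] := gid_dr ide.
case: (eqVneq (gd k) e) => dk; last by move/Eg_supportP: (fE e ide) => ->; rewrite ?re.
move/ffunP: sum0 => /(_ k); rewrite sum_ffunE ffunE (bigD1 e) //= big1 ?addr0 //.
move=> e' /andP [ide' e'e]; move/Eg_supportP: (fE e' ide') => -> //.
by have [-> _] := gid_dr ide'; rewrite dk eq_sym.
Qed.

End SmashProductAction.

Theorem proposition2p4 (K : comRingType) (G : groupoid) (A : algType K)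
    (Ag : G -> A -> Prop) (comp : G -> A -> A)
    (HA : graded_alg Ag comp) :
  groupoid_action (smash_mul comp) (Eg Ag) (@beta K G A) /\
  internal_direct_sum (@gid G) (Eg Ag).
Proof. by split; [exact: beta_action HA | exact: Eg_direct_sum HA]. Qed.
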